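(* Let $q$ be an odd prime power, $c\in\mathbb{F}_q^*$, and $f(X)=X(X^{q-1}-c)^{q+1}$ viewed as a map $\mathbb{F}_{q^2}\to\mathbb{F}_{q^2}$. Let $\mathrm{Fix}(f)=\{\alpha\in\mathbb{F}_{q^2}: f(\alpha)=\alpha\}$. Then \[ |\mathrm{Fix}(f)|=\begin{cases} q & \text{if } c^2=4,\\ 2q-1 & \text{if } c^2\neq 4 \text{ and } \chi_2\!\left(\frac{c+2}{c-2}\right)=-1,\\ 1 & \text{if } c^2\neq 4 \text{ and } \chi_2\!\left(\frac{c+2}{c-2}\right)=1.\end{cases} \]
   Context: $\chi_2$ is the quadratic character of $\mathbb{F}_q$: $\chi_2(\alpha)=1$ if $\alpha$ is a nonzero square in $\mathbb{F}_q$, $-1$ if $\alpha$ is a non-square, and $0$ if $\alpha=0$. *)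

From HB Require Import structures.
From mathcomp Require Import all_boot all_order all_algebra all_field.
Set Implicit Arguments. Unset Strict Implicit. Unset Printing Implicit Defensive.
Import GRing.Theory.
Local Open Scope ring_scope.

(* L plays the role of F_{q^2} (hypothesis #|L| = q^2 in the theorem);
   F_q is the subfield {x : L | x^q = x}. *)
Definition inFq (L : finFieldType) (q : nat) (x : L) : bool := x ^+ q == x.

Definition chi2 (L : finFieldType) (q : nat) (a : L) : int :=
  if a == 0 then 0
  else if [exists y : L, inFq q y && (y ^+ 2 == a)] then 1 else -1.

Definition fmap (L : finFieldType) (q : nat) (c : L) (x : L) : L :=
  x * (x ^+ (q.-1) - c) ^+ q.+1.

Definition Fix (L : finFieldType) (q : nat) (c : L) : {set L} :=
  [set x : L | fmap q c x == x].

From HB Require Import structures.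
From mathcomp Require Import all_boot all_order all_algebra all_field.
From mathcomp Require Import ring zify.
Set Implicit Arguments. Unset Strict Implicit. Unset Printing Implicit Defensive.
Import GRing.Theory.
Local Open Scope ring_scope.

(* For x <> 0 put u = x^(q-1).  Then u^(q+1) = 1, so u^q = u^-1 and f(x) = x
   becomes (u - c)(u^-1 - c) = 1, i.e. u^2 - c u + 1 = 0.  As x |-> x^(q-1) maps
   F_{q^2}^* onto the (q+1)-th roots of unity with fibres of size q - 1, we get
   |Fix f| = 1 + (q - 1) N, where N counts the roots of u^2 - c u + 1 on that
   circle.  If c^2 = 4 the only root is c/2 = +-1, so N = 1.  Otherwise the
   Cayley transform y = (u + 1)/(u - 1) turns circle roots into the y with
   y^2 = (c + 2)/(c - 2) and y^q = -y.  Such y exist iff (c + 2)/(c - 2) is a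
   non-square in F_q, and then both roots u, u^-1 lie on the circle: N = 2;
   otherwise N = 0. *)

Lemma card_roots_lt_size (F : finFieldType) (P : {poly F}) (A : {set F}) :
  P != 0 -> {subset A <= root P} -> (#|A| < size P)%N.
Proof.
move=> P_neq0 AP; rewrite cardE max_poly_roots ?enum_uniq //.
by apply/allP => x; rewrite mem_enum; apply: AP.
Qed.

Lemma card_expr_fiber_le (F : finFieldType) n (a : F) :
  (0 < n)%N -> (#|[set x : F | x ^+ n == a]| <= n)%N.
Proof.
move=> n_gt0; rewrite -ltnS -(size_XnsubC a n_gt0).
apply: card_roots_lt_size => [|x]; first by rewrite -size_poly_gt0 size_XnsubC.
by rewrite inE => /eqP xa; rewrite unfold_in !hornerE xa subrr.
Qed.

Lemma expf_card_pred (F : finFieldType) (x : F) : x != 0 -> x ^+ #|F|.-1 = 1.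
Proof.
move=> x_neq0; apply: (mulfI x_neq0).
by rewrite -exprS (ltn_predK (card_finNzRing_gt1 F)) expf_card mulr1.
Qed.

(* The fibres of x |-> x^m over the n-th roots of unity cover F^* and have at
   most m elements each, while there are at most n such roots. *)
Lemma card_expr_fiber (F : finFieldType) m n (u : F) :
  #|F|.-1 = (m * n)%N -> (0 < m)%N -> u ^+ n = 1 ->
  #|[set x : F | x ^+ m == u]| = m.
Proof.
move=> cardF m_gt0 un1.
have /[!muln_gt0] /andP [_ n_gt0] : (0 < m * n)%N.
  by rewrite -cardF -ltnS (ltn_predK (card_finNzRing_gt1 F)) card_finNzRing_gt1.
pose fib v := [set x : F | x ^+ m == v].
pose roots1 := [set v : F | v ^+ n == 1].
have sum_fib : (\sum_(v in roots1) #|fib v| = m * n)%N.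
  rewrite -cardF -(cardC1 (0 : F)) -[in RHS]sum1_card.
  rewrite [RHS](partition_big (fun x => x ^+ m) (mem roots1)) /=; last first.
    by move=> x x_neq0; rewrite inE -exprM -cardF expf_card_pred.
  apply: eq_bigr => v; rewrite inE => /eqP vn1; rewrite sum1dep_card.
  apply: eq_card => x; rewrite !inE andb_idl // => /eqP xmv; apply/eqP => x0.
  move: vn1; rewrite -xmv x0 expr0n gtn_eqF //= expr0n gtn_eqF //= => /eqP.
  by rewrite eq_sym oner_eq0.
have := @leqif_sum _ (mem roots1) _ (fun v => #|fib v|) (fun _ => m)
  (fun v _ => leqif_eq (card_expr_fiber_le v m_gt0)).
move/geq_leqif; rewrite sum_fib sum_nat_const [(_ * m)%N]mulnC leq_mul2l.
rewrite card_expr_fiber_le ?orbT // => /esym/forall_inP/(_ u).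
by move=> fib_u; apply/eqP/fib_u; rewrite /roots1 /= inE un1.
Qed.

Lemma exists_sqrt_of_expr_half_eq1 (F : finFieldType) (z : F) :
  odd #|F| -> z ^+ (#|F|.-1)./2 = 1 -> exists y, y ^+ 2 = z.
Proof.
move=> oddF zn1; have cardF : #|F|.-1 = (2 * (#|F|.-1)./2)%N.
  case: #|F| oddF => //= k /negPf k_even.
  by rewrite -{1}(odd_double_half k) k_even mul2n.
have /card_gt0P [y] : (0 < #|[set y : F | y ^+ 2 == z]|)%N.
  by rewrite (card_expr_fiber cardF).
by rewrite inE => /eqP; exists y.
Qed.

(* With the junk value x / 0 = 0, cayley 1 = 0; this makes the identities
   cayleyN and cayleyV hold unconditionally. *)
Definition cayley (F : fieldType) (u : F) := (u + 1) / (u - 1).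

Lemma cayleyN (F : fieldType) (y : F) : cayley (- y) = (cayley y)^-1.
Proof.
by rewrite /cayley invf_div -[LHS]mulrNN -invrN !opprD !opprK.
Qed.

Lemma cayleyV (F : fieldType) (u : F) : u != 0 -> cayley u^-1 = - cayley u.
Proof.
move=> u_neq0; rewrite /cayley; have [->|u_neq1] := eqVneq u 1.
  by rewrite invr1 subrr invr0 !mulr0 oppr0.
have u1 : u - 1 != 0 by rewrite subr_eq0.
by field; rewrite u1 u_neq0 mulN1r subr_eq0 eq_sym u_neq1.
Qed.

Lemma cayley_sqr (F : fieldType) (c u : F) :
  c != 2 -> u ^+ 2 - c * u + 1 = 0 -> cayley u ^+ 2 = (c + 2) / (c - 2).
Proof.
move=> c_neq2 root_u.
have u_neq0 : u != 0.
  by apply: contra_eq_neq root_u => ->; rewrite expr0n mulr0 subr0 add0r oner_neq0.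
have sqrD : (u + 1) ^+ 2 = (c + 2) * u by rewrite -[LHS]subr0 -root_u; ring.
have sqrB : (u - 1) ^+ 2 = (c - 2) * u by rewrite -[LHS]subr0 -root_u; ring.
by rewrite expr_div_n sqrD sqrB invfM mulrACA divff // mulr1.
Qed.

Lemma cayley_root (F : fieldType) (c y : F) :
  c != 2 -> y != 1 -> y ^+ 2 = (c + 2) / (c - 2) ->
  cayley y ^+ 2 - c * cayley y + 1 = 0.
Proof.
move=> c_neq2 y_neq1 y2.
have c2 : c - 2 != 0 by rewrite subr_eq0.
have y1 : y - 1 != 0 by rewrite subr_eq0.
have -> : cayley y ^+ 2 - c * cayley y + 1 = (c + 2 - y ^+ 2 * (c - 2)) / (y - 1) ^+ 2.
  by rewrite /cayley; field.
by rewrite y2 divfK // subrr mul0r.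
Qed.

Lemma sqr_neq4_neq2 (F : fieldType) (c : F) : c ^+ 2 != 4 -> c != 2 /\ c != -2.
Proof.
by move=> c2_neq4; split; apply: contraNneq c2_neq4 => ->; rewrite ?sqrrN -natrX.
Qed.

Lemma ratio_neq0 (F : fieldType) (c : F) : c ^+ 2 != 4 -> (c + 2) / (c - 2) != 0.
Proof.
move=> /sqr_neq4_neq2 [c_neq2 c_neqN2].
by rewrite mulf_neq0 ?invr_eq0 ?subr_eq0 // addr_eq0.
Qed.

Lemma card_preimset (T T' : finType) (f : T -> T') (A : {set T'}) :
  #|f @^-1: A| = (\sum_(u in A) #|[set x | f x == u]|)%N.
Proof.
rewrite -sum1_card (partition_big f (mem A)) => [|x]; last by rewrite inE.
apply: eq_bigr => u uA; rewrite sum1dep_card; apply: eq_card => x; rewrite !inE.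
by case: eqP => [->|]; rewrite ?andbT ?andbF.
Qed.

Section FixedPoints.
Variables (L : finFieldType) (q : nat).
Hypotheses (charLq : [pchar L].-nat q) (oddq : odd q) (cardL : #|L| = (q ^ 2)%N).

Lemma exprDq (a b : L) : (a + b) ^+ q = a ^+ q + b ^+ q.
Proof. exact: exprDn_pchar. Qed.

Lemma exprNq (a : L) : (- a) ^+ q = - a ^+ q.
Proof. exact: exprNn_pchar. Qed.

Lemma exprBq (a b : L) : (a - b) ^+ q = a ^+ q - b ^+ q.
Proof. by rewrite exprDq exprNq. Qed.

Lemma cayley_exprq (u : L) : cayley u ^+ q = cayley (u ^+ q).
Proof. by rewrite /cayley expr_div_n exprDq exprBq expr1n. Qed.

Lemma q_gt1 : (1 < q)%N.
Proof. by rewrite -(ltn_exp2r 1 q (isT : 0 < 2)%N) exp1n -cardL card_finNzRing_gt1. Qed.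

Lemma two_neq0 : (2 : L) != 0.
Proof.
apply/eqP => two0; have char2 : (2 \in [pchar L])%N by rewrite inE /= two0 eqxx.
move: charLq; rewrite (eq_pnat _ (pcharf_eq char2)) => /p_natP [k q2k].
by move: oddq q_gt1; rewrite q2k oddX orbF => /eqP ->.
Qed.

Lemma succ_q_double : q.+1 = (q.+1)./2.*2.
Proof. by rewrite -[LHS]odd_double_half /= oddq. Qed.

Lemma card_units : #|L|.-1 = (q.-1 * q.+1)%N.
Proof. by rewrite cardL -subn1 -[1%N](exp1n 2) subn_sqr subn1 addn1. Qed.

Lemma expr_pred_circle (x : L) : x != 0 -> (x ^+ q.-1) ^+ q.+1 = 1.
Proof. by move=> x_neq0; rewrite -exprM -card_units expf_card_pred. Qed.

Lemma circle_exprq (u : L) : u ^+ q.+1 = 1 -> u != 0 /\ u ^+ q = u^-1.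
Proof.
move=> uq1; have u_neq0 : u != 0.
  by apply: contra_eq_neq uq1 => ->; rewrite expr0n eq_sym oner_neq0.
by split => //; apply: (mulfI u_neq0); rewrite mulfV // -exprS.
Qed.

Variable c : L.
Hypotheses (cq : c ^+ q = c) (c_neq0 : c != 0).

Definition circle_roots :=
  [set u : L | (u ^+ q.+1 == 1) && (u ^+ 2 - c * u + 1 == 0)].

Lemma fmap_fixed (x : L) : x != 0 -> (fmap q c x == x) = (x ^+ q.-1 \in circle_roots).
Proof.
move=> x_neq0; have [u_neq0 uq] := circle_exprq (expr_pred_circle x_neq0).
rewrite inE expr_pred_circle // eqxx /= /fmap -[X in _ == X]mulr1.
rewrite (inj_eq (mulfI x_neq0)); set u := x ^+ q.-1 in u_neq0 uq *.
rewrite exprS exprBq uq cq -subr_eq0.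
have -> : (u - c) * (u^-1 - c) - 1 = - (c / u) * (u ^+ 2 - c * u + 1) by field.
by rewrite mulf_eq0 oppr_eq0 mulf_eq0 invr_eq0 (negPf c_neq0) (negPf u_neq0).
Qed.

Lemma card_Fix : #|Fix q c| = (#|circle_roots| * q.-1).+1.
Proof.
have q1_gt0 : (0 < q.-1)%N by rewrite -subn1 subn_gt0 q_gt1.
have -> : Fix q c = 0 |: (fun x => x ^+ q.-1) @^-1: circle_roots.
  apply/setP => x; rewrite !inE; have [->|x_neq0] := eqVneq x 0.
    by rewrite /fmap mul0r eqxx.
  by rewrite fmap_fixed // inE.
rewrite cardsU1 !inE expr0n gtn_eqF //= expr0n /= eq_sym oner_eq0 /= add1n.
rewrite card_preimset -sum_nat_const; congr _.+1; apply: eq_bigr => u.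
by rewrite inE => /andP [/eqP uq1 _]; apply: card_expr_fiber; rewrite ?card_units.
Qed.

Lemma circle_roots_sqr4 : c ^+ 2 = 4 -> circle_roots = [set c / 2].
Proof.
move=> c2_4; have two0 := two_neq0.
have four0 : (4 : L) != 0 by rewrite (natrM _ 2 2) mulf_neq0.
have half_c2 : (c / 2) ^+ 2 = 1 by rewrite expr_div_n c2_4 -natrX divff.
apply/setP => u; rewrite !inE.
have -> : u ^+ 2 - c * u + 1 = (u - c / 2) ^+ 2.
  by rewrite -[1 in LHS]half_c2; field.
rewrite sqrf_eq0 subr_eq0 andb_idl // => /eqP ->.
by rewrite succ_q_double -mul2n exprM half_c2 expr1n.
Qed.

Lemma circle_root_sum (u : L) : u \in circle_roots -> c = u + u^-1.
Proof.
rewrite inE => /andP [/eqP uq1 /eqP root_u]; have [u_neq0 _] := circle_exprq uq1.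
by apply: (mulIf u_neq0); rewrite mulrDl mulVf // -expr2 -[RHS]subr0 -root_u; ring.
Qed.

Lemma circle_roots_pair (u : L) : u \in circle_roots -> circle_roots = [set u; u^-1].
Proof.
move=> u_root; have c_sum := circle_root_sum u_root.
move: u_root; rewrite inE => /andP [/eqP uq1 /eqP root_u].
have [u_neq0 _] := circle_exprq uq1.
apply/setP => w; rewrite !inE; apply/andP/orP => [[_ /eqP root_w] | ].
  have : (w - u) * (w - u^-1) = 0 by rewrite -root_w c_sum; field.
  by move/eqP; rewrite mulf_eq0 !subr_eq0 => /orP.
case=> /eqP ->; first by rewrite uq1 root_u !eqxx.
by rewrite exprVn uq1 invr1 eqxx; split => //; apply/eqP; rewrite c_sum; field.
Qed.

Lemma card_circle_roots_of_mem (u : L) :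
  c ^+ 2 != 4 -> u \in circle_roots -> #|circle_roots| = 2%N.
Proof.
move=> c2_neq4 u_root; rewrite (circle_roots_pair u_root) cards2.
suff -> : u != u^-1 by [].
move: (u_root); rewrite inE => /andP [/eqP /circle_exprq [u_neq0 _] _].
apply: contraNneq c2_neq4 => u_inv; apply/eqP.
have u2 : u ^+ 2 = 1 by rewrite expr2 {2}u_inv mulfV.
have -> : c ^+ 2 = 4 * u ^+ 2 by rewrite (circle_root_sum u_root) -u_inv; ring.
by rewrite u2 mulr1.
Qed.

Local Notation r := ((c + 2) / (c - 2)).

Lemma ratio_exprq : r ^+ q = r.
Proof.
have two_q : (2 : L) ^+ q = 2 by rewrite -[2]/(1 + 1 : L) exprDq expr1n.
by rewrite expr_div_n exprDq exprBq cq two_q.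
Qed.

Lemma cayley_circle_root (u : L) : c ^+ 2 != 4 -> u \in circle_roots ->
  cayley u ^+ 2 = r /\ cayley u ^+ q = - cayley u.
Proof.
move=> /sqr_neq4_neq2 [c_neq2 _]; rewrite inE => /andP [/eqP uq1 /eqP root_u].
have [u_neq0 uq] := circle_exprq uq1.
by rewrite (cayley_sqr c_neq2 root_u) cayley_exprq uq cayleyV.
Qed.

Lemma cayley_in_circle_roots (y : L) : c ^+ 2 != 4 -> y ^+ 2 = r -> y ^+ q = - y ->
  cayley y \in circle_roots.
Proof.
move=> /sqr_neq4_neq2 [c_neq2 _] y2 yq.
have one_neqN1 : (1 : L) != -1 by rewrite -addr_eq0; exact: two_neq0.
have y_neq1 : y != 1.
  by apply: contraNneq one_neqN1 => y1; move: yq; rewrite y1 expr1n => /eqP.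
have y_neqN1 : y != -1.
  by apply: contraNneq one_neqN1 => y1; move: yq; rewrite y1 exprNq expr1n opprK => ->.
have cayley_neq0 : cayley y != 0.
  by rewrite mulf_neq0 ?invr_eq0 // ?subr_eq0 // addr_eq0.
rewrite inE cayley_root // eqxx andbT exprS cayley_exprq yq cayleyN mulfV //.
Qed.

Lemma circle_roots_square : c ^+ 2 != 4 ->
  [exists y : L, inFq q y && (y ^+ 2 == r)] -> circle_roots = set0.
Proof.
move=> c2_neq4 /existsP [y /andP [/eqP yq /eqP y2]].
apply/setP => u; rewrite in_set0; apply/negP => u_root.
have [v2 vq] := cayley_circle_root c2_neq4 u_root; set v := cayley u in v2 vq.
have : (v - y) * (v + y) = 0 by rewrite -[RHS](subrr r) -{1}v2 -y2; ring.
move/eqP; rewrite mulf_eq0 subr_eq0 addr_eq0 => v_pmy.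
have v_fixed : v ^+ q = v by case/orP: v_pmy => /eqP ->; rewrite ?exprNq yq.
have /eqP : 2 * v = 0 by rewrite mulr_natl mulr2n -{1}v_fixed vq addNr.
rewrite mulf_eq0 (negPf two_neq0) => /eqP v0.
by move: (ratio_neq0 c2_neq4); rewrite -v2 v0 expr0n eqxx.
Qed.

Lemma card_circle_roots_nonsquare : c ^+ 2 != 4 ->
  ~~ [exists y : L, inFq q y && (y ^+ 2 == r)] -> #|circle_roots| = 2%N.
Proof.
move=> c2_neq4 /existsPn r_nonsquare; have r_neq0 := ratio_neq0 c2_neq4.
have r_unit : r ^+ q.-1 = 1.
  apply: (mulfI r_neq0); rewrite -exprS prednK ?ratio_exprq ?mulr1 //.
  by apply: ltnW; apply: q_gt1.
have [y y2] : exists y, y ^+ 2 = r.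
  apply: exists_sqrt_of_expr_half_eq1; first by rewrite cardL oddX oddq orbT.
  by rewrite card_units succ_q_double -doubleMr doubleK exprM r_unit expr1n.
have yq : y ^+ q = - y.
  have : (y ^+ q - y) * (y ^+ q + y) = 0.
    by rewrite -[RHS](subrr r) -{1}ratio_exprq -y2 -exprM mulnC exprM; ring.
  move/eqP; rewrite mulf_eq0 subr_eq0 addr_eq0 => /orP [yq|/eqP //].
  by move: (r_nonsquare y); rewrite /inFq yq y2 eqxx.
exact: card_circle_roots_of_mem c2_neq4 (cayley_in_circle_roots c2_neq4 y2 yq).
Qed.

End FixedPoints.

Theorem mainTheorem2 (L : finFieldType) (q : nat)
  (Hq : exists p k : nat, [/\ prime p, (0 < k)%N & q = (p ^ k)%N])
  (Hodd : odd q) (HL : #|L| = (q ^ 2)%N)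
  (c : L) (Hc : inFq q c) (Hc0 : c != 0) :
  (c ^+ 2 = 4 -> #|Fix q c| = q) /\
  (c ^+ 2 != 4 -> chi2 q ((c + 2) / (c - 2)) = -1 -> #|Fix q c| = (2 * q - 1)%N) /\
  (c ^+ 2 != 4 -> chi2 q ((c + 2) / (c - 2)) = 1 -> #|Fix q c| = 1%N).
Proof.
have charLq : [pchar L].-nat q.
  have [p [k [p_prime _ q_pk]]] := Hq.
  have charLp : p \in [pchar L].
    by apply: (@card_finPcharP _ _ (k * 2)) => //; rewrite HL q_pk expnM.
  by rewrite q_pk (eq_pnat _ (pcharf_eq charLp)) pnatX pnat_id.
have cq : c ^+ q = c := eqP Hc.
rewrite (card_Fix charLq HL cq Hc0) /chi2.
have q_gt1 := q_gt1 HL.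
split=> [c2_4 | ]; first by rewrite circle_roots_sqr4 // cards1 mul1n; lia.
split=> c2_neq4; rewrite (negPf (ratio_neq0 c2_neq4)).
  by case: ifPn => // r_nonsquare _; rewrite card_circle_roots_nonsquare //; lia.
by case: ifPn => // r_square _; rewrite circle_roots_square // cards0.
Qed.
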